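(* For $n\in\mathbb{N}$ let $(U_k^{(n)})_{k\in\mathbb{N}}$ be independent random variables uniformly distributed on $\{1,\dots,n\}$, let $Y_n(m):=\log{\rm lcm}(U_1^{(n)},\dots,U_m^{(n)})$ for $m\ge1$ and $Y_n(0)=0$, and for $t\ge0$ put $$Z_n(t):=\sum_{p\le n,\ p\ \text{prime}}\log p\cdot\mathbbm{1}_{\{\max_{1\le k\le\lfloor m_nt\rfloor}\lambda_p(U_k^{(n)})\ge1\}}$$ (the maximum over an empty set being $0$). Assume $m_n\to\infty$ and $m_n=o(n)$ as $n\to\infty$. Then for every $T>0$, $$\mathbb{E}\Bigl(\sup_{t\in[0,T]}\bigl(Y_n(\lfloor m_nt\rfloor)-Z_n(t)\bigr)\Bigr)=O(m_n^{1/2}),\qquad n\to\infty.$$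
   Context: For a prime $p$ and $k\in\mathbb{N}$, $\lambda_p(k)$ is the exponent of $p$ in the prime factorization of $k$. ${\rm lcm}$ denotes least common multiple. *)

From HB Require Import structures.
From mathcomp Require Import all_boot all_order all_algebra.
From mathcomp Require Import all_classical all_reals all_analysis.
Set Implicit Arguments. Unset Strict Implicit. Unset Printing Implicit Defensive.
Import Order.TTheory GRing.Theory Num.Theory.
Local Open Scope ring_scope.
Local Open Scope classical_set_scope.

(* A sample (U_1,...,U_M) of values in {1,...,n} is encoded as
   u : {ffun 'I_M -> 'I_n}, with U_{k+1} = (u k).+1. *)

Definition Yn (R : realType) (n M : nat) (u : {ffun 'I_M -> 'I_n}) (j : nat) : R :=
  ln ((\big[lcmn/1%N]_(k < M | (k < j)%N) (u k).+1)%:R).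

Definition Zn (R : realType) (n M : nat) (u : {ffun 'I_M -> 'I_n}) (j : nat) : R :=
  \sum_(p < n.+1 | prime p)
     ln (p%:R : R) *
       (if (1 <= \max_(k < M | (k < j)%N) logn p (u k).+1)%N then 1 else 0).

(* E( sup_{t in [0,T]} (Y_n(floor(m t)) - Z_n(t)) ), where only U_1..U_M with
   M = floor(m T) enter; the expectation is the average over the uniform
   product law on {1..n}^M (joint law of the i.i.d. uniform U_1..U_M). *)
Definition Esup (R : realType) (n : nat) (m T : R) : R :=
  let M := Num.truncn (m * T) in
  (n%:R ^+ M)^-1 *
  \sum_(u : {ffun 'I_M -> 'I_n})
     sup [set x : R | exists t : R, 0 <= t <= T /\
            x = Yn R u (Num.truncn (m * t)) - Zn R u (Num.truncn (m * t))].

From HB Require Import structures.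
From mathcomp Require Import all_boot all_order all_algebra.
From mathcomp Require Import all_classical all_reals all_analysis.
From mathcomp Require Import zify.
From mathcomp.algebra_tactics Require Import ring lra.
Set Implicit Arguments. Unset Strict Implicit. Unset Printing Implicit Defensive.
Import Order.TTheory GRing.Theory Num.Theory numFieldNormedType.Exports.

(* Y_n(floor(m_n t)) - Z_n(t) is the sum over primes p <= n of
   log p * (e_p - 1)^+, where e_p is the largest exponent of p among the
   U_k with k <= floor(m_n t); it is nondecreasing in t, so the supremum is
   bounded by its value at M = floor(m_n T).  A union bound gives
   P(e_p >= i) <= min(1, M / p^i), and sum_(i >= 2) min(1, M / p^i) is at
   most a weight w(p) that is nonincreasing in p with sum_k w(k) <= 10 sqrt M.
   Abel summation against Chebyshev's bound sum_(p <= x) log p <= x log 4,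
   itself a consequence of prod_(p <= n) p <= 4^n, then bounds the
   expectation by 10 log 4 sqrt M. *)

Lemma bin_mid_leq m : 'C(m.*2.+1, m) <= 4 ^ m.
Proof.
have sym : 'C(m.*2.+1, m.+1) = 'C(m.*2.+1, m).
  by rewrite -[in RHS]bin_sub; [congr 'C(_, _); lia | lia].
have := expnDn 1 1 m.*2.+1.
under eq_bigr do rewrite !exp1n !muln1.
rewrite (bigD1 (inord m)) // (bigD1 (inord m.+1)) /=; last first.
  by apply/eqP => /(congr1 val); rewrite /= !inordK //; lia.
rewrite !inordK ?sym; [|lia|lia].
have -> : (1 + 1) ^ m.*2.+1 = 2 * 4 ^ m by rewrite expnS -mul2n expnM.
by move=> two_pow; rewrite -(leq_pmul2l (isT : 0 < 2)) mul2n -addnn two_pow addnA leq_addr.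
Qed.

Lemma coprime_fact_prime p k : prime p -> k < p -> coprime p k`!.
Proof.
move=> pr_p; rewrite prime_coprime //; elim: k => [|k IHk] lt_k_p.
  by rewrite fact0 dvdn1 neq_ltn prime_gt1 ?orbT.
by rewrite factS Euclid_dvdM // negb_or IHk 1?ltnW // gtnNdvd.
Qed.

Lemma prime_dvdn_bin_mid m p : prime p -> m.+1 < p <= m.*2.+1 -> p %| 'C(m.*2.+1, m).
Proof.
move=> pr_p /andP[lt_m1_p le_p_2m1].
have : p %| (m.*2.+1)`! by rewrite dvdn_fact // prime_gt0.
rewrite -(bin_fact (_ : m <= m.*2.+1)); last lia.
have -> : m.*2.+1 - m = m.+1 by lia.
by rewrite Gauss_dvdl // coprimeMr !coprime_fact_prime //; lia.
Qed.

Lemma dvdn_prod_primes (r : seq nat) x : uniq r ->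
  {in r, forall p, prime p -> p %| x} -> \prod_(p <- r | prime p) p %| x.
Proof.
elim: r => [|p r IHr] /=; first by rewrite big_nil dvd1n.
case/andP=> p_r r_uniq dvd_x; rewrite big_cons.
have dvd_prod := IHr r_uniq (fun q qr => dvd_x q (mem_behead (s := p :: r) qr)).
case: ifP => // pr_p; rewrite Gauss_dvd ?dvd_prod ?dvd_x ?mem_head //.
rewrite prime_coprime // Euclid_dvd_prod // big_seq_cond big1 // => q /andP[qr pr_q].
by rewrite dvdn_prime2 //; apply: contraNF p_r => /eqP ->.
Qed.

Lemma primorial_leq n : \prod_(0 <= p < n.+1 | prime p) p <= 4 ^ n.-1.
Proof.
elim/ltn_ind: n => -[|[|[|n]]] IH; try by rewrite unlock.
have [n_odd | n_even] := boolP (odd n.+3); last first.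
  have n_not_prime : prime n.+3 = false.
    by apply/negP => /even_prime [//|]; rewrite (negbTE n_even).
  rewrite big_mkcond big_nat_recr //= -big_mkcond n_not_prime muln1.
  by apply: leq_trans (IH n.+2 _) _; rewrite ?leq_exp2l.
set m := n.+3./2.
have def_n : n.+3 = m.*2.+1 by rewrite -[in LHS](odd_double_half n.+3) n_odd.
rewrite (big_cat_nat _ (n := m.+2)) //=; last lia.
have -> : n.+2 = m + m by lia.
rewrite expnD leq_mul //; first by have := IH m.+1; apply; lia.
apply: leq_trans (bin_mid_leq m).
rewrite dvdn_leq ?bin_gt0 //; first lia.
rewrite dvdn_prod_primes ?iota_uniq // => p; rewrite mem_index_iota => range_p pr_p.
by rewrite prime_dvdn_bin_mid //; lia.
Qed.

Lemma logn_biglcm (I : Type) (r : seq I) (P : pred I) (F : I -> nat) p :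
  (forall i, P i -> 0 < F i) ->
  logn p (\big[lcmn/1]_(i <- r | P i) F i) = \max_(i <- r | P i) logn p (F i).
Proof.
move=> F_gt0.
suff /andP[_ /eqP//] : (0 < \big[lcmn/1]_(i <- r | P i) F i) &&
  (logn p (\big[lcmn/1]_(i <- r | P i) F i) == \max_(i <- r | P i) logn p (F i)).
apply: (big_ind2 (fun a b => (0 < a) && (logn p a == b))) => [|a1 a2 b1 b2|i Pi].
- by rewrite logn1.
- move=> /andP[a1_gt0 /eqP <-] /andP[b1_gt0 /eqP <-].
  by rewrite lcmn_gt0 a1_gt0 b1_gt0 /= logn_lcm.
- by rewrite F_gt0 ?eqxx.
Qed.

Lemma predn_leq_sum_leq e n : e <= n -> e.-1 <= \sum_(2 <= i < n.+1) (i <= e).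
Proof.
case: e => [|e] // le_e_n.
rewrite (big_cat_nat _ (n := e.+2)) //= -[X in X <= _]addn0 leq_add //.
rewrite big_nat_cond (eq_bigr (fun => 1)) => [|i /andP[/andP[_ lt_i] _]].
  by rewrite -big_nat_cond sum_nat_const_nat muln1; lia.
by rewrite -ltnS lt_i.
Qed.

Lemma logn_bigmax_union_bound (I : finType) (F : I -> nat) p i :
  prime p -> 0 < i -> (forall k, 0 < F k) ->
  nat_of_bool (i <= \max_k logn p (F k)) <= \sum_k (p ^ i %| F k).
Proof.
move=> pr_p i_gt0 F_gt0.
have [/existsP[k le_i_k]|none] := boolP [exists k, i <= logn p (F k)].
  apply: leq_trans (leq_b1 _) _.
  by rewrite (bigD1 k) //= pfactor_dvdn // le_i_k leq_addr.
suff : \max_k logn p (F k) < i by rewrite ltnNge => /negbTE ->.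
have : \max_k logn p (F k) <= i.-1.
  by apply/bigmax_leqP => k _; move/existsPn/(_ k): none; lia.
lia.
Qed.

Local Open Scope ring_scope.

Section PrimeSums.
Variable R : realType.

Lemma ln_prod_nat (I : Type) (r : seq I) (P : pred I) (f : I -> nat) :
  (forall i, P i -> (0 < f i)%N) ->
  ln ((\prod_(i <- r | P i) f i)%:R : R) = \sum_(i <- r | P i) ln ((f i)%:R : R).
Proof.
move=> f_gt0.
apply: (big_ind2 (fun (a : nat) (b : R) => (0 < a)%N -> ln (a%:R : R) = b)).
- by move=> _; rewrite ln1.
- move=> a1 b1 a2 b2 IH1 IH2; rewrite muln_gt0 => /andP[a1_gt0 a2_gt0].
  by rewrite natrM lnM ?IH1 ?IH2 // posrE ltr0n.
- by [].
by rewrite prodn_cond_gt0.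
Qed.

Lemma sum_ln_primes_le n : \sum_(p < n.+1 | prime p) ln (p%:R : R) <= n.-1%:R * ln 4.
Proof.
rewrite -ln_prod_nat; last by move=> p /prime_gt0.
rewrite mulr_natl -lnXn // ler_ln ?posrE ?ltr0n ?expn_gt0 //; last first.
  by rewrite prodn_cond_gt0 // => p /prime_gt0.
by rewrite -natrX ler_nat -(big_mkord prime id) primorial_leq.
Qed.

(* Abel summation against [sum_ln_primes_le]. *)
Lemma sum_primes_ln_mul_le n (w : nat -> R) :
  (forall k, (2 <= k <= n)%N -> 0 <= w k) ->
  (forall a b, (2 <= a)%N -> (a <= b <= n)%N -> w b <= w a) ->
  \sum_(p < n.+1 | prime p) ln (p%:R : R) * w p <= ln 4 * \sum_(2 <= k < n.+1) w k.
Proof.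
elim: n w => [|[|n] IHn] w w_ge0 w_noninc.
- by rewrite big_mkcond big_ord_recr big_ord0 /= big_geq // mulr0 add0r.
- by rewrite big_mkcond !big_ord_recr big_ord0 /= big_geq // mulr0 !add0r.
set c := w n.+2; have c_ge0 : 0 <= c by apply: w_ge0; lia.
have split_w p : ln (p%:R : R) * w p = ln (p%:R : R) * (w p - c) + c * ln (p%:R : R).
  by rewrite mulrBr (mulrC c) subrK.
under eq_bigr do rewrite split_w.
rewrite big_split /= -mulr_sumr.
rewrite big_mkcond big_ord_recr /= -big_mkcond /= subrr mulr0 if_same addr0.
have -> : \sum_(2 <= k < n.+3) w k = \sum_(2 <= k < n.+2) (w k - c) + c *+ n.+1.
  rewrite big_nat_recr //= sumrB sumr_const_nat (_ : n.+2 - 2 = n)%N; last lia.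
  by rewrite mulrSr addrA subrK.
rewrite mulrDr lerD //.
  apply: IHn => [k k_range|a b a_ge2 ab_range]; rewrite ?subr_ge0 ?lerD2r.
    by apply: w_noninc; lia.
  by apply: w_noninc; lia.
apply: le_trans (ler_wpM2l c_ge0 (sum_ln_primes_le n.+2)) _.
suff -> : c * (n.+1%:R * ln 4) = ln 4 * (c *+ n.+1) by [].
by rewrite -[c *+ _]mulr_natr; ring.
Qed.

Lemma ln_nat_sum_logn n L : (0 < L)%N ->
  (forall p, (n < p)%N -> logn p L = 0%N) ->
  ln (L%:R : R) = \sum_(p < n.+1 | prime p) ln (p%:R : R) * (logn p L)%:R.
Proof.
move=> L_gt0 logn_large.
have {1}-> : L = (\prod_(0 <= p < (maxn L n).+1 | prime p) p ^ logn p L)%N.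
  rewrite -{1}(partnT L_gt0) (widen_partn _ (leq_maxl L n)).
  rewrite big_mkcond [RHS]big_mkcond; apply: eq_bigr => p _ /=.
  by case: (boolP (prime p)) => // not_pr; rewrite /logn (negbTE not_pr).
rewrite ln_prod_nat; last by move=> p pr_p; rewrite expn_gt0 prime_gt0.
rewrite (big_cat_nat _ (n := n.+1)) //=; last lia.
rewrite [X in _ + X]big1_seq ?addr0 => [|p /andP[_]]; last first.
  by rewrite mem_index_iota => /andP[/logn_large -> _]; rewrite expn0 ln1.
rewrite big_mkord; apply: eq_bigr => p pr_p.
by rewrite natrX lnXn ?ltr0n ?prime_gt0 // mulr_natr.
Qed.

End PrimeSums.

Section TailWeight.
Variable R : realType.

(* For x >= 2, each of the terms i = 2, 3 of sum_(i >= 2) min(1, s^2 / x^i)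
   is at most half the first summand and the terms i >= 4 add up to at most
   the second; both summands telescope when x runs over the integers. *)
Definition tail_weight (s x : R) : R :=
  8 * s ^+ 2 / ((x - 1 + s) * (x + s)) + 2 * s / (x * (x - 1)).

Lemma le_min1_sqr (P y : R) : 0 <= y -> P <= 1 -> P <= y ^+ 2 -> P <= y.
Proof.
move=> y_ge0 P_le1 P_le_y2; have [y_ge1|y_lt1] := lerP 1 y.
  exact: le_trans P_le1 y_ge1.
by nra.
Qed.

Lemma le_min1_sqr_ratio (s x P : R) : 0 <= s -> 2 <= x ->
  P <= 1 -> P <= s ^+ 2 / x ^+ 2 -> P <= 4 * s ^+ 2 / ((x - 1 + s) * (x + s)).
Proof.
move=> s_ge0 x_ge2 P_le1 P_le_ratio.
have D_gt0 : 0 < (x - 1 + s) * (x + s) by apply: mulr_gt0; lra.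
have [x_le_s|s_lt_x] := lerP x s.
  apply: le_trans P_le1 _; rewrite ler_pdivlMr // mul1r.
  rewrite (_ : 4 * s ^+ 2 = (2 * s) * (2 * s)); last by ring.
  by apply: ler_pM; lra.
apply: le_trans P_le_ratio _.
rewrite [4 * _]mulrC -[s ^+ 2 * 4 / _]mulrA; apply: ler_wpM2l; first exact: sqr_ge0.
rewrite ler_pdivlMr // ler_pdivrMl ?exprn_gt0 //; last lra.
rewrite (_ : x ^+ 2 * 4 = (2 * x) * (2 * x)); last by ring.
by apply: ler_pM; lra.
Qed.

Lemma sum_geometric_tail_le (q : R) N : 1 < q ->
  \sum_(4 <= i < 4 + N) q^-1 ^+ i <= 2 / (q ^+ 2 * (q ^+ 2 - 1)).
Proof.
move=> q_gt1; have q_gt0 : 0 < q by lra.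
have qV_gt0 : 0 < q^-1 by rewrite invr_gt0.
have qV_lt1 : `|q^-1| < 1 by rewrite gtr0_norm // invf_lt1.
rewrite geometric_partial_tail; apply: le_trans (geometric_le_lim _ _ _ _) _ => //.
  by rewrite exprn_ge0 ?ltW.
have -> : q^-1 ^+ 4 * (1 - q^-1)^-1 = (q ^+ 3 * (q - 1))^-1.
  by field; apply/andP; split; apply/eqP; lra.
have -> : 2 / (q ^+ 2 * (q ^+ 2 - 1)) = (q ^+ 2 * (q ^+ 2 - 1) / 2)^-1.
  by field; apply/andP; split; apply/eqP; nra.
rewrite lef_pV2 ?posrE ?divr_gt0 ?mulr_gt0 ?exprn_gt0 ?subr_gt0 //.
- by rewrite ler_pdivrMr //; have := sqr_ge0 ((q - 1) * q); nra.
- by nra.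
Qed.

Lemma sum_le_tail_weight (s x : R) N (P : nat -> R) : 0 <= s -> 2 <= x ->
  (forall i, (2 <= i)%N -> P i <= 1) ->
  (forall i, (2 <= i)%N -> P i <= s ^+ 2 / x ^+ i) ->
  \sum_(2 <= i < N) P i <= tail_weight s x.
Proof.
move=> s_ge0 x_ge2 P_le1 P_le_ratio.
set q := Num.sqrt x; have q2 : q ^+ 2 = x by rewrite sqr_sqrtr //; lra.
have q_gt1 : 1 < q by have := sqrtr_ge0 x; rewrite -/q; nra.
set A := 4 * s ^+ 2 / ((x - 1 + s) * (x + s)).
have A_ge0 : 0 <= A.
  by rewrite /A; apply: divr_ge0; [apply: mulr_ge0; rewrite ?sqr_ge0 //; lra | apply: mulr_ge0; lra].
pose b i := if (i < 4)%N then A else s * q^-1 ^+ i.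
have b_ge0 i : 0 <= b i.
  by rewrite /b; case: ifP => // _; rewrite mulr_ge0 // exprn_ge0 // invr_ge0; lra.
have P_le_b i : (2 <= i)%N -> P i <= b i.
  move=> i_ge2; rewrite /b; case: ifP => _.
    apply: le_min1_sqr_ratio => //; first exact: P_le1.
    apply: le_trans (P_le_ratio i i_ge2) _.
    apply: ler_wpM2l; first exact: sqr_ge0.
    rewrite lef_pV2 ?posrE ?exprn_gt0 ?ler_eXn2l //; lra.
  apply: le_min1_sqr; first by rewrite mulr_ge0 // exprn_ge0 // invr_ge0; lra.
    exact: P_le1.
  by rewrite exprMn -exprM mulnC exprM exprVn q2 exprVn; exact: P_le_ratio.
apply: le_trans (_ : \sum_(2 <= i < 4 + N) b i <= _).
  rewrite (big_nat_widen 2 N (4 + N)); last exact: leq_addl.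
  rewrite big_mkcond; apply: ler_sum_nat => i /andP[i_ge2 _].
  by case: ifP => _; [exact: P_le_b | exact: b_ge0].
rewrite big_ltn; last lia.
rewrite big_ltn; last lia.
under eq_big_nat => i /andP[i_ge4 _] do rewrite /b ltnNge i_ge4 /=.
rewrite /b /= addrA -mulr_sumr /tail_weight lerD //; first by rewrite /A; lra.
rewrite mulrAC mulrC; apply: ler_wpM2r => //; rewrite -q2; exact: sum_geometric_tail_le.
Qed.

Lemma tail_weight_ge0 (s x : R) : 0 <= s -> 2 <= x -> 0 <= tail_weight s x.
Proof.
move=> s_ge0 x_ge2; rewrite /tail_weight addr_ge0 // divr_ge0 //.
all: by apply: mulr_ge0; rewrite ?sqr_ge0 //; lra.
Qed.

Lemma tail_weight_noninc (s x y : R) : 0 <= s -> 2 <= x -> x <= y ->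
  tail_weight s y <= tail_weight s x.
Proof.
move=> s_ge0 x_ge2 x_le_y; rewrite /tail_weight lerD //.
all: apply: ler_wpM2l; first by apply: mulr_ge0; rewrite ?sqr_ge0 //; lra.
all: rewrite lef_pV2 ?posrE; first (by apply: ler_pM; lra).
all: by apply: mulr_gt0; lra.
Qed.

Lemma sum_tail_weight_le (s : R) N : 0 <= s ->
  \sum_(2 <= k < N) tail_weight s k%:R <= 10 * s.
Proof.
move=> s_ge0; have [N_lt2|N_ge2] := ltnP N 2.
  by rewrite big_geq 1?ltnW //; lra.
pose g k : R := - (k%:R - 1 + s)^-1; pose h k : R := - (k%:R - 1)^-1.
rewrite (eq_big_nat _ _ (F2 := fun k =>
  8 * s ^+ 2 * (g k.+1 - g k) + 2 * s * (h k.+1 - h k))); last first.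
  move=> k /andP[k_ge2 _]; have : 2 <= (k%:R : R) by rewrite (ler_nat R 2 k).
  rewrite /tail_weight /g /h -natr1 => k_ge2'.
  by field; repeat (apply/andP; split); apply/eqP; lra.
rewrite big_split /= -!mulr_sumr !telescope_sumr // /g /h /=.
have N_ge2' : 2 <= (N%:R : R) by rewrite (ler_nat R 2 N).
have -> : (2%:R : R) - 1 = 1 by rewrite -natr1 addrK.
have inv1 : 0 <= s * (N%:R - 1 + s)^-1 by rewrite mulr_ge0 // invr_ge0; lra.
have inv2 : 0 <= s * (N%:R - 1 : R)^-1 by rewrite mulr_ge0 // invr_ge0; lra.
have s_ratio : s * (s * (1 + s)^-1) <= s * 1.
  by rewrite ler_wpM2l // ler_pdivrMr ?mul1r; lra.
rewrite invr1; nra.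
Qed.

End TailWeight.

Section Sample.
Variables (R : realType) (n M : nat) (u : {ffun 'I_M -> 'I_n}).

Definition max_logn_upto (p j : nat) := (\max_(k < M | (k < j)%N) logn p (u k).+1)%N.
Definition max_logn (p : nat) := (\max_(k < M) logn p (u k).+1)%N.

Definition lcm_excess : R :=
  \sum_(p < n.+1 | prime p) ln (p%:R : R) * (max_logn p).-1%:R.

Lemma max_logn_leq p : (max_logn p <= n)%N.
Proof.
apply/bigmax_leqP => k _; rewrite -ltnS.
by apply: leq_trans (ltn_logl _ (ltn0Sn _)) _; rewrite ltnS ltnW.
Qed.

Lemma Yn_sub_Zn j : Yn R u j - Zn R u j =
  \sum_(p < n.+1 | prime p) ln (p%:R : R) * (max_logn_upto p j).-1%:R.
Proof.
rewrite /Yn (@ln_nat_sum_logn _ n) => [||p lt_n_p]; first last.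
- rewrite logn_biglcm // big1 // => k _.
  by rewrite lognE gtnNdvd ?andbF //; have := ltn_ord (u k); lia.
- by elim/big_ind: _ => // a b a_gt0 b_gt0; rewrite lcmn_gt0 a_gt0.
rewrite /Zn -sumrB; apply: eq_bigr => p _; rewrite -mulrBr logn_biglcm //.
by rewrite /max_logn_upto; case: (\max_(k < M | _) _)%N => [|e]; rewrite ?subrr // -natr1 addrK.
Qed.

Lemma Yn_sub_Zn0 : Yn R u 0 - Zn R u 0 = 0.
Proof. by rewrite Yn_sub_Zn big1 // => p _; rewrite /max_logn_upto big_pred0 ?mulr0. Qed.

Lemma Yn_sub_Zn_le j : Yn R u j - Zn R u j <= lcm_excess.
Proof.
rewrite Yn_sub_Zn; apply: ler_sum => p pr_p.
rewrite ler_wpM2l ?ln_ge0 ?(ler_nat R 1) ?prime_gt0 // ler_nat -!subn1 leq_sub2r //.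
by apply/bigmax_leqP => k _; exact: (leq_bigmax (F := fun k => logn p (u k).+1)).
Qed.

End Sample.

Lemma sum_ffun_coord (R : realType) (I J : finType) (i : I) (g : J -> R) :
  \sum_(u : {ffun I -> J}) g (u i) = #|J|%:R ^+ #|I|.-1 * \sum_y g y.
Proof.
pose G j y := if j == i then g y else 1.
have := @bigA_distr_bigA R 0 1 *%R +%R I J G.
rewrite (bigD1 i) //= {1}/G eqxx.
rewrite [X in _ * X = _](eq_bigr (fun => #|J|%:R)); last first.
  by move=> j j_neq_i; rewrite /G (negbTE j_neq_i) sumr_const.
rewrite prodr_const cardC1 mulrC => ->; apply: eq_bigr => u _.
by rewrite (bigD1 i) //= /G eqxx big1 ?mulr1 // => j j_neq_i; rewrite (negbTE j_neq_i).
Qed.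

Section UniformMean.
Variables (R : realType) (n M : nat).
Implicit Types (F G : {ffun 'I_M -> 'I_n} -> R).

Definition mean F : R := (n%:R ^+ M)^-1 * \sum_u F u.

Lemma ler_mean F G : (forall u, F u <= G u) -> mean F <= mean G.
Proof. by move=> le_FG; rewrite ler_wpM2l ?invr_ge0 ?exprn_ge0 ?ler_sum. Qed.

Lemma mean_ge0 F : (forall u, 0 <= F u) -> 0 <= mean F.
Proof. by move=> F_ge0; rewrite mulr_ge0 ?invr_ge0 ?exprn_ge0 ?sumr_ge0. Qed.

Lemma meanZ c F : mean (fun u => c * F u) = c * mean F.
Proof. by rewrite /mean -mulr_sumr mulrCA. Qed.

Lemma mean_sum (I : Type) (r : seq I) (P : pred I) (F : I -> _ -> R) :
  mean (fun u => \sum_(k <- r | P k) F k u) = \sum_(k <- r | P k) mean (F k).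
Proof. by rewrite /mean exchange_big mulr_sumr. Qed.

Hypothesis n_gt0 : (0 < n)%N.

Lemma mean_indicator_le1 (A : pred {ffun 'I_M -> 'I_n}) : mean (fun u => (A u)%:R) <= 1.
Proof.
have nM_gt0 : 0 < n%:R ^+ M :> R by rewrite exprn_gt0 ?ltr0n.
rewrite /mean ler_pdivrMl // mulr1 -natr_sum -natrX ler_nat.
apply: leq_trans (_ : \sum_(u : {ffun 'I_M -> 'I_n}) 1 <= _)%N.
  by apply: leq_sum => u _; exact: leq_b1.
by rewrite sum1_card card_ffun !card_ord.
Qed.

Lemma mean_coord (k : 'I_M) (g : 'I_n -> R) :
  mean (fun u => g (u k)) = n%:R^-1 * \sum_x g x.
Proof.
rewrite /mean sum_ffun_coord !card_ord mulrA; congr (_ * _).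
case: M k => [[]//|M' _] /=.
by rewrite exprS invfM -mulrA mulVf ?mulr1 // expf_neq0 // pnatr_eq0 -lt0n.
Qed.

Lemma mean_max_logn_geq p i : prime p -> (0 < i)%N ->
  mean (fun u => (i <= max_logn u p)%:R) <= M%:R / p%:R ^+ i.
Proof.
move=> pr_p i_gt0; set d := (p ^ i)%N.
apply: le_trans (_ : mean (fun u => \sum_k (d %| (u k).+1)%:R) <= _).
  apply: ler_mean => u; rewrite -natr_sum ler_nat.
  exact: logn_bigmax_union_bound.
rewrite mean_sum (eq_bigr (fun => n%:R^-1 * (n %/ d)%:R)) => [|k _]; last first.
  by rewrite (mean_coord k (fun x => (d %| x.+1)%:R)) -natr_sum divn_count_dvd big_add1 big_mkord.
rewrite sumr_const card_ord -[_ *+ M]mulr_natl; apply: ler_wpM2l => //.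
rewrite mulrC ler_pdivrMr ?ltr0n // mulrC ler_pdivlMr ?exprn_gt0 ?ltr0n ?prime_gt0 //.
by rewrite -natrX -natrM ler_nat leq_trunc_div.
Qed.

End UniformMean.

Lemma mean_lcm_excess_le (R : realType) n M : (0 < n)%N ->
  mean (@lcm_excess R n M) <= 10 * ln 4 * Num.sqrt (M%:R : R).
Proof.
move=> n_gt0; set s := Num.sqrt (M%:R : R); have s_ge0 : 0 <= s := sqrtr_ge0 _.
have ln_p_ge0 p : prime p -> 0 <= ln (p%:R : R).
  by move=> pr_p; rewrite ln_ge0 // (ler_nat R 1) prime_gt0.
pose P p i := mean (fun u : {ffun 'I_M -> 'I_n} => (i <= max_logn u p)%:R : R).
apply: le_trans (_ : \sum_(p < n.+1 | prime p) ln (p%:R : R) * \sum_(2 <= i < n.+1) P p i <= _).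
  rewrite /P; under eq_bigr do rewrite -mean_sum -meanZ; rewrite -mean_sum.
  apply: ler_mean => u; apply: ler_sum => p pr_p; rewrite ler_wpM2l ?ln_p_ge0 //.
  by rewrite -natr_sum ler_nat predn_leq_sum_leq ?max_logn_leq.
apply: le_trans (_ : \sum_(p < n.+1 | prime p) ln (p%:R : R) * tail_weight s p%:R <= _).
  apply: ler_sum => p pr_p; rewrite ler_wpM2l ?ln_p_ge0 //.
  apply: sum_le_tail_weight => // [|i _|i i_ge2]; first by rewrite (ler_nat R 2) prime_gt1.
    exact: mean_indicator_le1.
  by rewrite sqr_sqrtr ?ler0n // mean_max_logn_geq //; lia.
apply: le_trans (sum_primes_ln_mul_le (w := fun k => tail_weight s k%:R) _ _) _.
- by move=> k /andP[k_ge2 _]; rewrite tail_weight_ge0 ?(ler_nat R 2).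
- by move=> a b a_ge2 /andP[le_ab _]; rewrite tail_weight_noninc ?(ler_nat R 2) ?ler_nat.
rewrite (mulrC 10) -mulrA; apply: ler_wpM2l; last exact: sum_tail_weight_le.
by rewrite ln_ge0 //; lra.
Qed.

Local Open Scope classical_set_scope.

Lemma sup_image_bounds (R : realType) (T B : R) (g : R -> R) :
  0 <= T -> g 0 = 0 -> (forall t, g t <= B) ->
  0 <= sup [set x | exists t, 0 <= t <= T /\ x = g t] <= B.
Proof.
move=> T_ge0 g0 g_le; set S := [set x | _].
have S0 : S 0 by exists 0; rewrite lexx T_ge0 g0.
have S_ub : ubound S B by move=> x [t [_ ->]].
apply/andP; split; first by apply: sup_upper_bound => //; split; [exists 0 | exists B].
by apply: ge_sup => //; exists 0.
Qed.

Lemma Esup_bounds (R : realType) n (m T : R) : (0 < n)%N -> 0 <= T ->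
  0 <= Esup n m T <= 10 * ln 4 * Num.sqrt ((Num.truncn (m * T))%:R : R).
Proof.
move=> n_gt0 T_ge0; rewrite /Esup -/(mean _).
have sup_bnd (u : {ffun 'I_(Num.truncn (m * T)) -> 'I_n}) :
    0 <= sup [set x | exists t, 0 <= t <= T /\
      x = Yn R u (Num.truncn (m * t)) - Zn R u (Num.truncn (m * t))] <= lcm_excess R u.
  apply: sup_image_bounds => // [|t]; last exact: Yn_sub_Zn_le.
  by rewrite mulr0 truncn0 Yn_sub_Zn0.
apply/andP; split; first by apply: mean_ge0 => u; case/andP: (sup_bnd u).
apply: le_trans (mean_lcm_excess_le R _ n_gt0); apply: ler_mean => u.
by case/andP: (sup_bnd u).
Qed.

Theorem lemma6p1 (R : realType) (m : nat -> R)
  (m_inf : m n @[n --> \oo] --> +oo)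
  (m_o : m n / n%:R @[n --> \oo] --> (0 : R))
  (T : R) (T_gt0 : 0 < T) :
  exists C : R, exists N : nat, forall n : nat, (N <= n)%N ->
    `| Esup n (m n) T | <= C * Num.sqrt (m n).
Proof.
have [N _ m_ge0] := (cvgryPge _).1 m_inf 0.
exists (10 * ln 4 * Num.sqrt T), (maxn N 1) => n; rewrite geq_max => /andP[le_Nn n_gt0].
have {le_Nn} m_n_ge0 : 0 <= m n by exact: m_ge0.
have /andP[Esup_ge0 Esup_le] := Esup_bounds (m n) n_gt0 (ltW T_gt0).
rewrite ger0_norm //; apply: le_trans Esup_le _.
rewrite [leRHS]mulrAC -[leRHS]mulrA -sqrtrM //; apply: ler_wpM2l.
  by rewrite mulr_ge0 ?ln_ge0 //; lra.
by rewrite ler_sqrt ?mulr_ge0 ?truncn_le ?mulr_ge0 //; lra.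
Qed.
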